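(* Let $n\in\mathbb N$ and let $X\subseteq[0,1]$ be an arbitrary subset. Then the set $$Y_n(X):=\{\mathbf y\in S:\ \operatorname{rint}I_j(\mathbf y)\not\subseteq X\ \text{for } j=0,1,\dots,n\}$$ is open and pathwise connected. In particular, the regularity set $Y$ associated with any $n$-field function $J$ and any singular kernel functions $K_1,\dots,K_n$ is open and pathwise connected.
   Context: $S=\{\mathbf y\in\mathbb R^n:0<y_1<\dots<y_n<1\}$. Set $y_0:=0$ and $y_{n+1}:=1$, and let $I_j(\mathbf y)=[y_j,y_{j+1}]$ for $j=0,\dots,n$. $\operatorname{rint}$ denotes the interior relative to $[0,1]$; thus $\operatorname{rint}I_0(\mathbf y)=[0,y_1)$, $\operatorname{rint}I_n(\mathbf y)=(y_n,1]$, and $\operatorname{rint}I_j(\mathbf y)=(y_j,y_{j+1})$ for $0<j<n$. For singular kernel functions $K_1,\dots,K_n$ (concave on $(-1,0)$ and on $(0,1)$, with $\lim_{t\to0}K_i(t)=-\infty$) and an $n$-field function $J:[0,1]\to[-\infty,\infty)$, the regularity set is $Y=\{\mathbf y\in S:\sup_{t\in I_j(\mathbf y)}\bigl(J(t)+\sum_iK_i(t-y_i)\bigr)\neq-\infty\ \forall j\}$. This set equals $Y_n(X)$ with $X=\{t\in[0,1]:J(t)=-\infty\}$. An $n$-field function is bounded above, and its set of finite values has total weight greater than $n$, where $0$ and $1$ have weight $1/2$ and interior points have weight $1$. *)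

From HB Require Import structures.
From mathcomp Require Import all_boot all_order all_algebra.
From mathcomp Require Import all_classical all_reals all_analysis.
Set Implicit Arguments. Unset Strict Implicit. Unset Printing Implicit Defensive.
Import Order.TTheory GRing.Theory Num.Theory.
Import numFieldNormedType.Exports.
Local Open Scope classical_set_scope.
Local Open Scope ring_scope.

Section Defs.
Variable R : realType.

Definition path_connected {V : topologicalType} (A : set V) : Prop :=
  forall x y, A x -> A y ->
    exists f : R -> V,
      {within [set` `[0%R, 1%R]], continuous f} /\ f 0 = x /\ f 1 = y /\
      (forall t, [set` `[0%R, 1%R]] t -> A (f t)).

Variable n : nat.

(** yext y j = y_j with the conventions y_0 = 0 and y_{n+1} = 1
    (the paper's y_1..y_n are the entries y 0 0 .. y 0 (n-1)). *)
Definition yext (y : 'rV[R]_n) (j : nat) : R :=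
  nth 1 (0 :: [seq y ord0 i | i <- enum 'I_n]) j.

Definition simplexS : set 'rV[R]_n :=
  [set y | forall j : nat, (j <= n)%N -> yext y j < yext y j.+1].

Definition Iint (y : 'rV[R]_n) (j : nat) : set R := [set` `[yext y j, yext y j.+1]].

(** rint I_j(y): interior of I_j(y) relative to [0,1]. *)
Definition rintI (y : 'rV[R]_n) (j : nat) : set R :=
  [set t | (if j == 0%N then 0 <= t else yext y j < t) /\
           (if j == n then t <= 1 else t < yext y j.+1)].

Definition Yn (X : set R) : set 'rV[R]_n :=
  [set y | simplexS y /\ forall j : nat, (j <= n)%N -> ~ (rintI y j `<=` X)].

Definition pt_weight (t : R) : R := if (t == 0) || (t == 1) then 2^-1 else 1.

Definition nfield_fun (J : R -> \bar R) : Prop :=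
  (forall t, [set` `[0%R, 1%R]] t -> J t != +oo%E) /\
  (exists M : R, forall t, [set` `[0%R, 1%R]] t -> (J t <= M%:E)%E) /\
  (exists s : seq R, uniq s /\
     (forall t, t \in s -> [set` `[0%R, 1%R]] t /\ J t \is a fin_num) /\
     n%:R < \sum_(t <- s) pt_weight t).

Definition concave_on (D : set R) (f : R -> R) : Prop :=
  forall x z l, D x -> D z -> 0 <= l -> l <= 1 ->
    l * f x + (1 - l) * f z <= f (l * x + (1 - l) * z).

(** singular kernel function (given by its values off 0; its value at 0 is
    taken to be the limit -oo, see kext). *)
Definition singular_kernel (K : R -> R) : Prop :=
  concave_on [set` `]-1%R, 0%R[] K /\ concave_on [set` `]0%R, 1%R[] K /\
  K x @[x --> 0^'] --> -oo.

Definition kext (K : R -> R) (t : R) : \bar R :=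
  if t == 0 then -oo%E else (K t)%:E.

Definition Yreg (J : R -> \bar R) (K : 'I_n -> R -> R) : set 'rV[R]_n :=
  [set y | simplexS y /\ forall j : nat, (j <= n)%N ->
     ereal_sup [set (J t + \sum_(i < n) kext (K i) (t - y ord0 i))%E
               | t in Iint y j] != -oo%E].

End Defs.

From mathcomp Require Import ring lra.
From mathcomp Require Import all_boot all_order all_algebra.
From mathcomp Require Import all_classical all_reals all_analysis.
Set Implicit Arguments. Unset Strict Implicit. Unset Printing Implicit Defensive.
Import Order.TTheory GRing.Theory Num.Theory.
Import numFieldNormedType.Exports.
Local Open Scope classical_set_scope.
Local Open Scope ring_scope.

(* [Y_n(X)] is open because each defining condition -- [y_j < y_(j+1)], or
   some [t] outside [X] lying in [rint I_j(y)] -- survives small perturbations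
   of the continuous coordinates.  It is path connected because it is closed
   under enlarging intervals: if every [I_j(v)] contains [I_j(a)] for some [a]
   in [Y_n(X)], then [v] is in [Y_n(X)].  For [y, z] in [Y_n(X)], their
   coordinatewise maximum [w] has this property, and the path raising [y] to
   [w] one coordinate at a time from the top, then lowering [w] to [z] one
   coordinate at a time from the bottom, keeps it at every moment.  Finally
   [J + sum_i K_i(t - y_i)] is [-oo] exactly when [J t] is or [t] is a node
   [y_i], so the regularity set is [Y_n({J = -oo})]. *)

Section clamp.
Variable R : realType.
Implicit Types a b c u : R.

Definition clamp01 u : R := Num.min (Num.max u 0) 1.

Lemma clamp01_le0 u : u <= 0 -> clamp01 u = 0.
Proof. by move=> u0; rewrite /clamp01 (max_r u0) (min_l (@ler01 R)). Qed.

Lemma clamp01_ge1 u : 1 <= u -> clamp01 u = 1.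
Proof. by move=> u1; rewrite /clamp01 max_l ?(le_trans ler01) // min_r. Qed.

Lemma clamp01_ge0 u : 0 <= clamp01 u.
Proof. by rewrite /clamp01 le_min ler01 le_max lexx orbT. Qed.

Lemma clamp01_le1 u : clamp01 u <= 1.
Proof. by rewrite /clamp01 ge_min lexx orbT. Qed.

Lemma clamp01_continuous : continuous clamp01.
Proof.
move=> u; apply: (@continuous_min R R (fun x => Num.max x 0) (fun=> 1) u).
  by apply: (@continuous_max R R id (fun=> 0) u); [exact: cvg_id|exact: cvg_cst].
exact: cvg_cst.
Qed.

Lemma clamp01_eq0_or_succ_eq1 u : clamp01 u = 0 \/ clamp01 (u + 1) = 1.
Proof.
by case: (lerP u 0) => u0; [left; exact: clamp01_le0|right; apply: clamp01_ge1; lra].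
Qed.

Definition lerp a b c : R := a + (b - a) * c.

Lemma lerpxx a c : lerp a a c = a.
Proof. by rewrite /lerp subrr mul0r addr0. Qed.

Lemma lerp_clamp01_le0 a b u : u <= 0 -> lerp a b (clamp01 u) = a.
Proof. by move=> u0; rewrite /lerp clamp01_le0 // mulr0 addr0. Qed.

Lemma lerp_clamp01_bounds a b u : a <= b ->
  a <= lerp a b (clamp01 u) /\ lerp a b (clamp01 u) <= b.
Proof.
move=> ab; have := clamp01_ge0 u; have := clamp01_le1 u.
rewrite /lerp; set c := clamp01 u => c1 c0; split; nra.
Qed.

Lemma lerp_clamp01_succ_cases a b a' b' u : a <= b -> a' <= b' ->
  (lerp a b (clamp01 u) <= a /\ a' <= lerp a' b' (clamp01 (u + 1))) \/
  (lerp a b (clamp01 u) <= b /\ b' <= lerp a' b' (clamp01 (u + 1))).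
Proof.
move=> ab ab'; have [_ Lb] := lerp_clamp01_bounds u ab.
have [La' _] := lerp_clamp01_bounds (u + 1) ab'.
case: (clamp01_eq0_or_succ_eq1 u) => [c0|c1]; [left|right].
  by split=> //; rewrite /lerp c0 mulr0 addr0.
by split=> //; rewrite /lerp c1 mulr1 addrC subrK.
Qed.

End clamp.
Arguments clamp01 {R} u.

Lemma near_lt (R : realType) (T : topologicalType) (g h : T -> R) x :
  continuous g -> continuous h -> g x < h x -> \forall y \near x, g y < h y.
Proof.
move=> cg ch gh.
have := @cvgr_gt _ _ _ _ _ _ (cvgB (ch x) (cg x)) 0; rewrite subr_gt0 => /(_ _ _ gh).
by apply: filterS => y; rewrite subr_gt0.
Qed.

Lemma mx_continuous (R : realType) (T : topologicalType) m n
    (f : T -> 'M[R]_(m, n)) :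
  (forall i j, continuous (fun t => f t i j)) -> continuous f.
Proof.
move=> cf t A /nbhs_ballP[e /= e0 eA].
have : \forall s \near t, forall ij : 'I_m * 'I_n,
    ball (f t ij.1 ij.2) e (f s ij.1 ij.2).
  apply: (@filter_forall _ _
    (fun ij s => ball (f t ij.1 ij.2) e (f s ij.1 ij.2)) (nbhs t)).
  by move=> [i j]; apply: (cf i j t); apply: nbhsx_ballx.
by apply: filterS => s H; apply: eA; split => // i j; exact: (H (i, j)).
Qed.

Section yext.
Variables (R : realType) (n : nat).
Implicit Types y v : 'rV[R]_n.

Lemma yext0 y : yext y 0 = 0.
Proof. by []. Qed.

Lemma yextS y (i : 'I_n) : yext y i.+1 = y ord0 i.
Proof. by rewrite /yext /= (nth_map i) ?size_enum_ord // nth_ord_enum. Qed.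

Lemma yext_gtn y k : (n < k)%N -> yext y k = 1.
Proof. by case: k => // k nk; rewrite /yext /= nth_default // size_map size_enum_ord. Qed.

Lemma yext_row (F : nat -> R) : F 0%N = 0 -> (forall k, (n < k)%N -> F k = 1) ->
  forall k, yext (\row_(i < n) F i.+1) k = F k.
Proof.
move=> F0 F1 [|k]; first by rewrite yext0.
case: (ltnP k n) => kn; last by rewrite yext_gtn // F1.
by rewrite -[k]/(nat_of_ord (Ordinal kn)) yextS mxE.
Qed.

Lemma yext_continuous k : continuous (fun y : 'rV[R]_n => yext y k).
Proof.
case: k => [|k]; first exact: cst_continuous.
case: (ltnP k n) => kn.
  rewrite (_ : (fun y => _) = fun y => y ord0 (Ordinal kn)); last first.
    by apply: funext => y; rewrite -yextS.
  exact: coord_continuous.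
rewrite (_ : (fun y => _) = fun=> 1); first exact: cst_continuous.
by apply: funext => y; rewrite yext_gtn.
Qed.

Lemma simplexS_yext_le y k l : simplexS y -> (k <= l <= n.+1)%N ->
  yext y k <= yext y l.
Proof.
move=> Sy /andP[kl]; elim: l kl => [|l IH] kl ln.
  by move: kl; rewrite leqn0 => /eqP ->.
case: (ltngtP k l.+1) kl => // [kl _|-> _ //].
exact: le_trans (IH kl (ltnW ln)) (ltW (Sy l ln)).
Qed.

Lemma rintI_subset y v k : yext v k <= yext y k -> yext y k.+1 <= yext v k.+1 ->
  rintI y k `<=` rintI v k.
Proof.
move=> vy yv t [t1 t2]; split.
  by case: (k == 0%N) t1 => // t1; apply: le_lt_trans t1.
by case: (k == n) t2 => // t2; apply: lt_le_trans yv.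
Qed.

End yext.
Arguments yext_continuous {R n} k.

Section Yn.
Variables (R : realType) (n : nat) (X : set R).
Implicit Types y v : 'rV[R]_n.

Lemma Yn_of_subintervals v :
  (forall k, (k <= n)%N -> exists2 a : 'rV[R]_n, Yn X a &
     yext v k <= yext a k /\ yext a k.+1 <= yext v k.+1) ->
  Yn X v.
Proof.
move=> H; split=> [k kn|k kn vX].
  have [a [Sa _] [ak ak1]] := H k kn.
  exact: le_lt_trans ak (lt_le_trans (Sa k kn) ak1).
have [a [_ Ya] [ak ak1]] := H k kn.
by apply: (Ya k kn); apply: subset_trans vX; apply: rintI_subset.
Qed.

Lemma Yn_open : open (@Yn R n X).
Proof.
rewrite openE => y [Sy Yy].
have : \forall v \near y, forall j : 'I_n.+1,
    yext v j < yext v j.+1 /\ exists2 t, rintI v j t & ~ X t.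
  apply: (@filter_forall _ _ (fun (j : 'I_n.+1) v =>
    yext v j < yext v j.+1 /\ exists2 t, rintI v j t & ~ X t) (nbhs y)) => j.
  have jn : (j <= n)%N by rewrite -ltnS.
  have /existsNP[t /not_implyP[[t1 t2] Xt]] := Yy j jn.
  have ordered := near_lt (yext_continuous j) (yext_continuous j.+1) (Sy j jn).
  have above : \forall v \near y, if nat_of_ord j == 0%N then 0 <= t else yext v j < t.
    move: t1; case: ifP => _ t1; first exact: filterE.
    exact: near_lt (yext_continuous j) (@cst_continuous _ R t) t1.
  have below : \forall v \near y, if nat_of_ord j == n then t <= 1 else t < yext v j.+1.
    move: t2; case: ifP => _ t2; first exact: filterE.
    exact: near_lt (@cst_continuous _ R t) (yext_continuous j.+1) t2.
  apply: filterS (filterI ordered (filterI above below)) => v [? [? ?]].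
  by split=> //; exists t.
apply: filterS => v H; split=> [k kn|k kn vX].
  by have [] := H (Ordinal (kn : (k < n.+1)%N)).
have [_ [t vt Xt]] := H (Ordinal (kn : (k < n.+1)%N)).
exact/Xt/vX.
Qed.

Section staircase.
Variables Y Z W : nat -> R.

(* Written as one formula, continuous in [s]: for [s <= n] the coordinates
   rise from [Y] to [W] one at a time from the top, for [s >= n] they fall
   from [W] to [Z] one at a time from the bottom. *)
Definition staircase (s : R) (k : nat) : R :=
  Y k + (W k - Y k) * clamp01 (s + (k%:R - n%:R))
      - (W k - Z k) * clamp01 (s + (1 - n%:R - k%:R)).

Lemma staircase_continuous k : continuous (staircase ^~ k).
Proof.
have clamp_shift a : continuous (fun s => clamp01 (s + a)).
  move=> s; apply: (@continuous_comp _ _ _ (fun s => s + a) clamp01).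
    by apply: cvgD; [exact: cvg_id|exact: cvg_cst].
  exact: clamp01_continuous.
move=> s; apply: cvgB; [apply: cvgD; first exact: cvg_cst|];
  by apply: cvgM; [exact: cvg_cst|exact: clamp_shift].
Qed.

Lemma staircase_rise s k : (0 < k)%N -> s <= n%:R ->
  staircase s k = lerp (Y k) (W k) (clamp01 (s - n%:R + k%:R)).
Proof.
move=> k0 sn; have k1 : 1 <= k%:R :> R by rewrite ler1n.
rewrite /staircase /lerp (@clamp01_le0 _ (s + (1 - _ - _))); last lra.
by rewrite mulr0 subr0 (addrC k%:R) addrA.
Qed.

Lemma staircase_fall s k : (0 < k)%N -> n%:R <= s ->
  staircase s k = lerp (Z k) (W k) (clamp01 (n%:R - s + k%:R)).
Proof.
move=> k0 ns; have k1 : 1 <= k%:R :> R by rewrite ler1n.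
rewrite /staircase /lerp (@clamp01_ge1 _ (s + (k%:R - _))) ?mulr1; last lra.
case: (lerP (n%:R - s + k%:R) 0) => [u0|u0].
  by rewrite (clamp01_le0 u0) (@clamp01_ge1 _ (s + _)); [ring|lra].
case: (lerP 1 (n%:R - s + k%:R)) => [u1|u1].
  by rewrite (clamp01_ge1 u1) (@clamp01_le0 _ (s + _)); [ring|lra].
rewrite /clamp01 !max_l ?min_l; [ring|lra|lra|lra|lra].
Qed.

End staircase.

Lemma Yn_path_connected : path_connected R (@Yn R n X).
Proof.
move=> y z Yy Yz.
pose W k := Num.max (yext y k) (yext z k).
have W0 : W 0%N = 0 by rewrite /W !yext0 maxxx.
have W1 k : (n < k)%N -> W k = 1 by move=> kn; rewrite /W !yext_gtn // maxxx.
have yW k : yext y k <= W k by rewrite /W le_max lexx.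
have zW k : yext z k <= W k by rewrite /W le_max lexx orbT.
pose w := \row_(i < n) W i.+1.
have yext_w : yext w =1 W := yext_row W0 W1.
have Yw : Yn X w.
  apply: Yn_of_subintervals => k kn; rewrite !yext_w /W.
  case: (lerP (yext z k) (yext y k)) => zy.
    by exists y => //; rewrite max_l.
  by exists z => //; rewrite max_r ?ltW.
pose c : R := n%:R *+ 2.
pose f t := \row_(i < n) staircase (yext y) (yext z) W (t * c) i.+1.
have f_lerp t : exists2 a, a = y \/ a = z &
    exists u, forall k, yext (f t) k = lerp (yext a k) (W k) (clamp01 (u + k%:R)).
  have fk k : yext (f t) k.+1 = staircase (yext y) (yext z) W (t * c) k.+1.
    case: (ltnP k n) => kn; first by rewrite -[k]/(nat_of_ord (Ordinal kn)) yextS mxE.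
    by rewrite /staircase W1 // !yext_gtn // !subrr !mul0r; lra.
  case: (lerP (t * c) n%:R) => tc; [exists y; [by left|]|exists z; [by right|]].
    exists (t * c - n%:R) => -[|k]; first by rewrite !yext0 W0 lerpxx.
    by rewrite fk staircase_rise.
  exists (n%:R - t * c) => -[|k]; first by rewrite !yext0 W0 lerpxx.
  by rewrite fk staircase_fall ?ltW.
exists f; split.
  apply/continuous_subspaceT/mx_continuous => i j; rewrite (ord1 i).
  have -> : (fun t => f t ord0 j) = staircase (yext y) (yext z) W ^~ j.+1 \o *%R^~ c.
    by apply: funext => t; rewrite mxE.
  move=> t; apply: continuous_comp; first exact: mulrr_continuous.
  exact: staircase_continuous.
have succ_le_n (i : 'I_n) : (i.+1)%:R <= n%:R :> R by rewrite ler_nat.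
split.
  apply/rowP => i; rewrite mxE mul0r staircase_rise // -yextS.
  by rewrite lerp_clamp01_le0 //; have := succ_le_n i; lra.
split.
  apply/rowP => i; rewrite mxE mul1r staircase_fall // -?yextS.
    by rewrite lerp_clamp01_le0 //; have := succ_le_n i; rewrite /c; lra.
  by rewrite /c; have := ler0n R n; lra.
move=> t _; apply: Yn_of_subintervals => k kn.
have [a a_yz [u fa]] := f_lerp t.
have aW l : yext a l <= W l by case: a_yz => ->.
rewrite !fa -natr1 addrA.
case: (lerp_clamp01_succ_cases (u + k%:R) (aW k) (aW k.+1)) => -[fk fk1].
  by exists a; [case: a_yz => ->|].
by exists w; rewrite ?yext_w.
Qed.

End Yn.

Section Yreg.
Variables (R : realType) (n : nat).
Implicit Types y : 'rV[R]_n.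

Lemma adde_sum_kext_neqNy (J : R -> \bar R) (K : 'I_n -> R -> R) y t :
  (J t + \sum_(i < n) kext (K i) (t - y ord0 i) != -oo)%E <->
  (J t != -oo)%E /\ forall i, t != y ord0 i.
Proof.
rewrite adde_eq_ninfty negb_or esum_eqNy /kext; split.
  case/andP=> -> /existsPn kfin; split=> // i; have := kfin i.
  by rewrite subr_eq0; case: (eqVneq t (y ord0 i)) => // ->; rewrite !eqxx.
case=> -> tny /=; apply/existsPn => i.
by rewrite subr_eq0 (negbTE (tny i)) andbF.
Qed.

Lemma rintI_Iint y j t : simplexS y -> (j <= n)%N ->
  rintI y j t <-> Iint y j t /\ forall i, t != y ord0 i.
Proof.
move=> Sy jn; rewrite /Iint /= in_itv /=; split=> [[t1 t2]|[/andP[t1 t2] tny]].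
  split.
    apply/andP; split.
      by move: t1; case: ifP => [/eqP -> |_ /ltW //]; rewrite yext0.
    by move: t2; case: ifP => [/eqP -> |_ /ltW //]; rewrite yext_gtn.
  move=> i; rewrite -yextS; apply/eqP => ti; subst t.
  case: (leqP i.+1 j) => ij.
    move: t1; case: ifP => [/eqP j0|_]; first by rewrite j0 in ij.
    by rewrite ltNge (simplexS_yext_le Sy) // ij leqW.
  move: t2; case: ifP => [/eqP jn'|_]; first by rewrite jn' ltnNge ltn_ord in ij.
  by rewrite ltNge (simplexS_yext_le Sy) // ij leqW.
split.
  case: ifP => [/eqP j0|j0]; first by move: t1; rewrite j0 yext0.
  case: j jn t1 t2 j0 => [//|j] jn t1 t2 _.
  by rewrite lt_neqAle t1 andbT; have := tny (Ordinal jn); rewrite -yextS eq_sym.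
case: ifP => [/eqP jn'|jn']; first by move: t2; rewrite jn' yext_gtn.
have jn2 : (j < n)%N by rewrite ltn_neqAle jn' jn.
by rewrite lt_neqAle t2 andbT; have := tny (Ordinal jn2); rewrite -yextS.
Qed.

Lemma Yreg_Yn (J : R -> \bar R) (K : 'I_n -> R -> R) :
  Yreg J K = Yn [set t | J t = -oo%E].
Proof.
apply/seteqP; split=> y [Sy Yy]; split=> // j jn.
  move=> rintJ; have := Yy j jn; apply/negP; rewrite negbK; apply/eqP.
  apply/ereal_sup_ninfty => _ [t It <-] /=.
  apply/eqP/negPn/negP => /adde_sum_kext_neqNy[/eqP Jt tny].
  exact/Jt/rintJ/(rintI_Iint _ Sy jn).
have /existsNP[t /not_implyP[rt Jt]] := Yy j jn.
have [It tny] := (rintI_Iint _ Sy jn).1 rt.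
apply/negP => /eqP/ereal_sup_ninfty/(_ _ (ex_intro2 _ _ t It erefl))/eqP.
by apply/negP/adde_sum_kext_neqNy; split=> //; apply/eqP.
Qed.

End Yreg.

Theorem proposition4p1 (R : realType) (n : nat) :
  (forall X : set R, X `<=` [set` `[0%R, 1%R]] ->
     open (@Yn R n X) /\ path_connected R (@Yn R n X)) /\
  (forall (J : R -> \bar R) (K : 'I_n -> R -> R),
     @nfield_fun R n J -> (forall i, singular_kernel (K i)) ->
     open (Yreg J K) /\ path_connected R (Yreg J K)).
Proof.
split=> [X _|J K _ _]; rewrite ?Yreg_Yn.
  by split; [exact: Yn_open|exact: Yn_path_connected].
by split; [exact: Yn_open|exact: Yn_path_connected].
Qed.
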